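(* Every locally strongly bounded CB-generated Polish group is SB-generated.
   Context: A topological group is Polish if it is separable and completely metrizable. A subset of a topological group $G$ is coarsely bounded if it has finite diameter in every continuous left-invariant metric on $G$; $G$ is CB-generated if generated by a coarsely bounded subset. A subset of $G$ is strongly bounded if it has finite diameter in every left-invariant metric on $G$; $G$ is SB-generated if generated by a strongly bounded subset, and locally strongly bounded if some open neighborhood of the identity is strongly bounded. *)

From HB Require Import structures.
From mathcomp Require Import all_boot.
From mathcomp Require Import all_classical all_reals topology.
From mathcomp Require Import Rstruct Rstruct_topology.
From Stdlib Require Import Reals.

Set Implicit Arguments.
Unset Strict Implicit.
Unset Printing Implicit Defensive.

Local Open Scope classical_set_scope.
Local Open Scope group_scope.

HB.mixin Record isTopologicalGroup G of Group G & Topological G := {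
  mulg_continuous : continuous (fun p : G * G => p.1 * p.2);
  invg_continuous : continuous (fun x : G => x^-1)
}.

#[short(type="topologicalGroupType")]
HB.structure Definition TopologicalGroup :=
  {G of isTopologicalGroup G & Group G & Topological G}.

Section Defs.
Variable G : topologicalGroupType.

Definition is_metric (d : G -> G -> R) : Prop :=
  (forall x y, (0 <= d x y)%R) /\
  (forall x y, d x y = 0%R <-> x = y) /\
  (forall x y, d x y = d y x) /\
  (forall x y z, (d x z <= d x y + d y z)%R).

Definition left_invariant (d : G -> G -> R) : Prop :=
  forall g x y, d (g * x) (g * y) = d x y.

Definition finite_diameter (d : G -> G -> R) (A : set G) : Prop :=
  exists M : R, forall x y, A x -> A y -> (d x y <= M)%R.

Definition continuous_metric (d : G -> G -> R) : Prop :=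
  continuous (fun p : G * G => d p.1 p.2).

Definition coarsely_bounded (A : set G) : Prop :=
  forall d, is_metric d -> left_invariant d -> continuous_metric d ->
    finite_diameter d A.

Definition strongly_bounded (A : set G) : Prop :=
  forall d, is_metric d -> left_invariant d -> finite_diameter d A.

Definition is_subgroup (H : set G) : Prop :=
  H 1 /\ (forall x y, H x -> H y -> H (x * y)) /\ (forall x, H x -> H x^-1).

Definition generated (A : set G) : set G :=
  [set x | forall H, is_subgroup H -> A `<=` H -> H x].

Definition generates (A : set G) : Prop := generated A = setT.

Definition CB_generated : Prop :=
  exists A : set G, coarsely_bounded A /\ generates A.

Definition SB_generated : Prop :=
  exists A : set G, strongly_bounded A /\ generates A.

Definition locally_strongly_bounded : Prop :=
  exists U : set G, open U /\ U 1 /\ strongly_bounded U.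

Definition separable : Prop :=
  exists D : set G, countable D /\ dense D.

Definition metric_compatible (d : G -> G -> R) : Prop :=
  forall U : set G, open U <->
    (forall x, U x -> exists eps : R, (0 < eps)%R /\
       forall y, (d x y < eps)%R -> U y).

Definition metric_complete (d : G -> G -> R) : Prop :=
  forall u : nat -> G,
    (forall eps : R, (0 < eps)%R -> exists N, forall m n,
       (N <= m)%N -> (N <= n)%N -> (d (u m) (u n) < eps)%R) ->
    exists x, forall eps : R, (0 < eps)%R -> exists N, forall n,
       (N <= n)%N -> (d (u n) x < eps)%R.

Definition completely_metrizable : Prop :=
  exists d, is_metric d /\ metric_compatible d /\ metric_complete d.

Definition polish : Prop := separable /\ completely_metrizable.

End Defs.

(* Let U be a strongly bounded identity neighbourhood and A a coarsely bounded
   generating set.  The compatible metric yields symmetric identity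
   neighbourhoods V_0 ⊆ U with V_(n+1)^3 ⊆ V_n and intersection {1}, and
   separability yields a sequence (e_n) whose translates e_n V_0 cover G.
   Give the elements of V_n weight 2^-n and e_n^(±1) weight n + 2.  By the
   Birkhoff-Kakutani argument the induced word metric is a continuous
   left-invariant metric, so A has finite diameter for it.  A word of weight
   < N only uses letters from V_0 and e_0^(±1), ..., e_(N-1)^(±1); hence A,
   and so G, is generated by the strongly bounded set V_0 ∪ {e_0, ..., e_(N-1)}. *)

From HB Require Import structures.
From mathcomp Require Import all_boot.
From mathcomp Require Import all_classical all_reals topology.
From mathcomp Require Import Rstruct Rstruct_topology.
From Stdlib Require Import Reals Lra.

Set Implicit Arguments.
Unset Strict Implicit.
Unset Printing Implicit Defensive.

Local Open Scope classical_set_scope.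
Local Open Scope R_scope.
Local Open Scope group_scope.

Section Words.
Variables (G : groupType) (W : G -> R -> Prop).
Implicit Types (l : seq (G * R)) (x : G).

Definition word_val l : G := \prod_(a <- l) a.1.

Definition word_weight l : R := \big[Rplus/0]_(a <- l) a.2.

Fixpoint admissible l : Prop :=
  if l is a :: l' then W a.1 a.2 /\ admissible l' else True.

Definition word_inv l := rev [seq (a.1^-1, a.2) | a <- l].

Lemma word_val_nil : word_val [::] = 1.
Proof. exact: big_nil. Qed.

Lemma word_weight_nil : word_weight [::] = 0.
Proof. exact: big_nil. Qed.

Lemma word_val_cons a l : word_val (a :: l) = a.1 * word_val l.
Proof. exact: big_cons. Qed.

Lemma word_weight_cons a l : word_weight (a :: l) = a.2 + word_weight l.
Proof. exact: big_cons. Qed.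

Lemma word_val_cat l1 l2 : word_val (l1 ++ l2) = word_val l1 * word_val l2.
Proof. exact: big_cat. Qed.

Lemma word_weight_cat l1 l2 :
  word_weight (l1 ++ l2) = word_weight l1 + word_weight l2.
Proof. exact: big_cat. Qed.

Lemma admissible_cat l1 l2 :
  admissible (l1 ++ l2) <-> admissible l1 /\ admissible l2.
Proof. by elim: l1 => [|a l1 IH] /=; [tauto | rewrite IH; tauto]. Qed.

Lemma word_val_inv l : word_val (word_inv l) = (word_val l)^-1.
Proof. by rewrite /word_val /word_inv -map_rev big_map prodgV revK. Qed.

Lemma word_weight_inv l : word_weight (word_inv l) = word_weight l.
Proof. by rewrite /word_weight /word_inv big_rev big_map. Qed.

Lemma word_split l t : 0 <= t < word_weight l ->
  exists l1 a l2, l = l1 ++ a :: l2 /\ word_weight l1 <= t < word_weight l1 + a.2.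
Proof.
elim: l t => [|a l IH] t; rewrite ?word_weight_cons; first by rewrite word_weight_nil; lra.
move=> ht; case: (Rlt_le_dec t a.2) => hta.
  by exists [::], a, l; rewrite word_weight_nil; split => //; lra.
have [l1 [b [l2 [-> hb]]]] := IH (t - a.2) ltac:(lra).
by exists (a :: l1), b, l2; rewrite word_weight_cons; split => //; lra.
Qed.

Hypothesis W_ge0 : forall g w, W g w -> 0 <= w.
Hypothesis W_inv : forall g w, W g w -> W g^-1 w.

Lemma admissible_inv l : admissible l -> admissible (word_inv l).
Proof.
elim: l => [|a l IH] //= [Wa /IH adm_l].
rewrite /word_inv /= rev_cons -cats1 admissible_cat /=.
by split => //; split => //; apply: W_inv.
Qed.

Lemma word_weight_ge0 l : admissible l -> 0 <= word_weight l.
Proof.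
elim: l => [|a l IH] /=; first by rewrite word_weight_nil; lra.
by move=> [/W_ge0 wa /IH wl]; rewrite word_weight_cons; lra.
Qed.

Definition words_of x := [set l | admissible l /\ word_val l = x].

Definition word_length x : R := inf (word_weight @` words_of x).

Hypothesis W_spans : forall x, words_of x !=set0.

Lemma word_length_le l : admissible l -> word_length (word_val l) <= word_weight l.
Proof.
move=> adm_l; apply/RleP/ge_inf; last by exists l.
by exists 0 => _ [l' [adm_l' _] <-]; apply/RleP/word_weight_ge0.
Qed.

Lemma word_length_ge0 x : 0 <= word_length x.
Proof.
have [l wl] := W_spans x; apply/RleP/lb_le_inf; first by exists (word_weight l), l.
by move=> _ [l' [adm_l' _] <-]; apply/RleP/word_weight_ge0.
Qed.

Lemma word_length_approx x eps : 0 < eps ->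
  exists2 l, words_of x l & word_weight l < word_length x + eps.
Proof.
move=> /RltP eps_gt0; have [l wl] := W_spans x.
have inf_ex : has_inf (word_weight @` words_of x).
  split; first by exists (word_weight l), l.
  by exists 0 => _ [l' [adm_l' _] <-]; apply/RleP/word_weight_ge0.
by have [_ [l' wl' <-] /RltP lt] := inf_adherent eps_gt0 inf_ex; exists l'.
Qed.

Lemma word_length1 : word_length 1 = 0.
Proof.
apply: Rle_antisym; last exact: word_length_ge0.
by have := @word_length_le [::] I; rewrite word_val_nil word_weight_nil.
Qed.

Lemma word_length_letter g w : W g w -> word_length g <= w.
Proof.
move=> Wgw; have := @word_length_le [:: (g, w)] (conj Wgw I).
by rewrite /word_weight /word_val !big_seq1.
Qed.

Lemma word_lengthM x y : word_length (x * y) <= word_length x + word_length y.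
Proof.
apply: le_epsilon => eps eps_gt0.
have half_gt0 : 0 < (eps / 2)%R by lra.
have [lx [adm_x <-] lt_x] := word_length_approx x half_gt0.
have [ly [adm_y <-] lt_y] := word_length_approx y half_gt0.
rewrite -word_val_cat.
have := word_length_le (proj2 (admissible_cat lx ly) (conj adm_x adm_y)).
rewrite word_weight_cat; lra.
Qed.

Lemma word_lengthV x : word_length x^-1 = word_length x.
Proof.
suff le_inv y : word_length y^-1 <= word_length y.
  by apply: Rle_antisym => //; rewrite -{1}(invgK x).
apply: le_epsilon => eps eps_gt0.
have [l [adm_l <-] lt_l] := word_length_approx y eps_gt0.
have := word_length_le (admissible_inv adm_l).
rewrite word_val_inv word_weight_inv; lra.
Qed.

End Words.

Definition dyadic (n : nat) : R := (/ 2 ^ n)%R.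

Lemma dyadic_gt0 n : 0 < dyadic n.
Proof. by apply/Rinv_0_lt_compat/pow_lt; lra. Qed.

Lemma dyadicS n : dyadic n.+1 = (dyadic n / 2)%R.
Proof. by rewrite /dyadic /= Rinv_mult; lra. Qed.

Lemma dyadic_ltn k n : (k < n)%nat -> dyadic n < dyadic k.
Proof.
move=> /ltP lt_kn; apply: Rinv_lt_contravar; last by apply: Rlt_pow => //; lra.
by apply: Rmult_lt_0_compat; apply: pow_lt; lra.
Qed.

Lemma dyadic_leP k n : dyadic n <= dyadic k <-> (k <= n)%nat.
Proof.
split=> [le_nk | ]; first by rewrite leqNgt; apply/negP => /dyadic_ltn; lra.
by rewrite leq_eqVlt => /orP [/eqP -> | /dyadic_ltn]; lra.
Qed.

Lemma dyadic_small eps : 0 < eps -> exists n, dyadic n < eps.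
Proof.
move=> eps_gt0; have [|n lt_n] := pow_lt_1_zero (/ 2) _ eps eps_gt0.
  by rewrite Rabs_pos_eq; lra.
exists n; have := lt_n n (le_n n); rewrite pow_inv Rabs_pos_eq //.
exact: Rlt_le (dyadic_gt0 n).
Qed.

Lemma dyadic_le1 n : dyadic n <= 1%R.
Proof. by have := proj2 (dyadic_leP 0 n) isT; rewrite /dyadic /= Rinv_1. Qed.

Lemma nat_fun_bounded (f : nat -> R) N : exists M, forall n, (n < N)%nat -> f n <= M.
Proof.
elim: N => [|N [M f_M]]; first by exists 0.
exists (Rmax M (f N)) => n; rewrite ltnS leq_eqVlt => /orP [/eqP -> | /f_M f_n_le].
  exact: Rmax_r.
by have := Rmax_l M (f N); lra.
Qed.

Section Kakutani.
Variables (G : groupType) (V : nat -> set G) (W : G -> R -> Prop).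
Hypothesis V1 : forall n, V n 1.
Hypothesis V_cube : forall n a b c, V n.+1 a -> V n.+1 b -> V n.+1 c -> V n (a * b * c).
Hypothesis W_gt0 : forall g w, W g w -> 0 < w.
Hypothesis W_dyadic : forall g w, W g w -> w <= 1%R -> exists2 n, V n g & w = dyadic n.

Lemma V_mono m n : (m <= n)%nat -> V n `<=` V m.
Proof.
move=> /subnK <-; elim: (n - m)%nat => [//|k IH] x /= Vx.
by apply: IH; rewrite -(mulg1 x) -(mulg1 (x * 1)); apply: V_cube.
Qed.

Let W_ge0 g w (Wgw : W g w) : 0 <= w := Rlt_le _ _ (W_gt0 Wgw).

Lemma admissible_weight_le0 l : admissible W l -> word_weight l <= 0 -> l = [::].
Proof.
case: l => [//|a l] /= [/W_gt0 a_gt0 /(word_weight_ge0 W_ge0)].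
by rewrite word_weight_cons; lra.
Qed.

(* Cut the word where its weight reaches half: both sides weigh at most
   2^-(k+1), and the middle letter lies in V_(k+1) unless it alone weighs 2^-k. *)
Lemma kakutani l k : admissible W l -> word_weight l <= dyadic k -> V k (word_val l).
Proof.
have [m] := ubnP (size l); elim: m l k => // m IH l k size_l adm_l w_l.
have [-> | l_nil] := eqVneq l [::]; first by rewrite word_val_nil.
have w_gt0 : 0 < word_weight l.
  apply: Rnot_le_lt => /(admissible_weight_le0 adm_l) l_eq.
  by rewrite l_eq in l_nil.
have [l1 [a [l2 [l_eq w_split]]]] :=
  word_split (l := l) (t := (word_weight l / 2)%R) ltac:(lra).
move: size_l adm_l w_l w_gt0 w_split; rewrite l_eq size_cat /= admissible_cat /=.
rewrite word_weight_cat word_weight_cons => size_l [adm1 [Wa adm2]] w_l w_gt0 w_split.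
have w1_ge0 := word_weight_ge0 W_ge0 adm1.
have w2_ge0 := word_weight_ge0 W_ge0 adm2.
have [j Vj a_eq] := W_dyadic Wa ltac:(have := dyadic_le1 k; lra).
have le_kj : (k <= j)%nat by apply/dyadic_leP; lra.
rewrite word_val_cat word_val_cons mulgA.
have [eq_kj | lt_kj] := eqVneq k j.
  have l1_nil : l1 = [::] by apply: admissible_weight_le0 => //; rewrite eq_kj in w_l; lra.
  have l2_nil : l2 = [::] by apply: admissible_weight_le0 => //; rewrite eq_kj in w_l; lra.
  by rewrite l1_nil l2_nil word_val_nil mul1g mulg1 eq_kj.
have V_half l' : (size l' < m)%nat -> admissible W l' ->
    word_weight l' <= (dyadic k / 2)%R -> V k.+1 (word_val l') by rewrite -dyadicS; exact: IH.
rewrite addnS ltnS in size_l; apply: V_cube.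
- by apply: V_half => //; [exact: leq_ltn_trans (leq_addr _ _) size_l | lra].
- by apply: V_mono Vj; rewrite ltn_neqAle lt_kj.
- by apply: V_half => //; [exact: leq_ltn_trans (leq_addl _ _) size_l | lra].
Qed.

End Kakutani.

Lemma countable_sub_range (T : choiceType) (x0 : T) (D : set T) :
  countable D -> exists e : nat -> T, D `<=` range e.
Proof.
move=> /countable_injP [f f_inj].
exists (fun n => xget x0 [set x | D x /\ f x = n]) => d Dd; exists (f d) => //.
have [] := xgetPex x0 (ex_intro (fun x => D x /\ f x = f d) d (conj Dd erefl)).
by move=> Dx fx; apply: f_inj; rewrite ?inE.
Qed.

Section TopologicalGroup.
Variable G : topologicalGroupType.
Implicit Types (x y : G) (A B O : set G).

Lemma nbhs_mul x y O : nbhs (x * y) O ->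
  exists2 A, nbhs x A & exists2 B, nbhs y B & forall a b, A a -> B b -> O (a * b).
Proof.
move=> /(@mulg_continuous G (x, y)) [[A B] /= [nA nB] AB_O].
by exists A => //; exists B => // a b Aa Bb; exact: (AB_O (a, b)).
Qed.

Lemma nbhs_translate x B : nbhs 1 B -> nbhs x [set y | B (x^-1 * y)].
Proof.
rewrite -(mulVg x) => /nbhs_mul [A nA [C nC AC_B]].
by apply: filterS nC => y Cy; apply: AC_B => //; exact: nbhs_singleton nA.
Qed.

Lemma nbhs1_inv B : nbhs 1 B -> nbhs 1 [set g | B g^-1].
Proof. by move=> nB; apply: (@invg_continuous G 1); rewrite invg1. Qed.

Definition symmetric_cube_root (O B : set G) :=
  (forall g, B g -> B g^-1) /\ (forall a b c, B a -> B b -> B c -> O (a * b * c)).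

Lemma nbhs1_cube_root O : nbhs 1 O -> exists2 B, nbhs 1 B & symmetric_cube_root O B.
Proof.
rewrite -{1}(mulg1 1) => /nbhs_mul [A nA [C nC AC_O]].
have : nbhs (1 * 1) (A `&` C) by rewrite mulg1; apply: filterI.
move=> /nbhs_mul [A' nA' [C' nC' AC'_AC]].
have nB : nbhs 1 (A' `&` C') by apply: filterI.
exists [set g | (A' `&` C') g /\ (A' `&` C') g^-1]; first exact: filterI (nbhs1_inv nB).
split=> [g [Bg BVg] | a b c [[A'a _] _] [[_ C'b] _] [[A'c C'c] _]].
  by split; rewrite //= invgK.
have [Aab _] := AC'_AC a b A'a C'b.
have [_ Cc] : (A `&` C) c.
  by rewrite -(mulg1 c); apply: AC'_AC => //; exact: nbhs_singleton nC'.
exact: AC_O.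
Qed.

Lemma cube_root_sequence (O : nat -> set G) : (forall n, nbhs 1 (O n)) ->
  exists V : nat -> set G, [/\ forall n, nbhs 1 (V n),
    forall n g, V n g -> V n g^-1,
    forall n a b c, V n.+1 a -> V n.+1 b -> V n.+1 c -> V n (a * b * c)
    & forall n, V n `<=` O n].
Proof.
move=> nO.
have root_ex P : exists B, nbhs 1 P -> nbhs 1 B /\ symmetric_cube_root P B.
  have [/nbhs1_cube_root [B nB B_root] | nP] := pselect (nbhs 1 P); last by exists setT.
  by exists B.
have [root root_spec] := choice root_ex.
have root_sub P : nbhs 1 P -> root P `<=` P.
  move=> nP g Pg; have [n1 [_ r3]] := root_spec P nP.
  by rewrite -(mulg1 g) -(mulg1 (g * 1)); apply: r3 => //; exact: nbhs_singleton n1.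
pose fix V n := if n is k.+1 then root (V k `&` O k.+1) else root (O 0%nat).
pose P n := if n is k.+1 then V k `&` O k.+1 else O 0%nat.
have V_spec n : [/\ nbhs 1 (P n), V n = root (P n) & V n `<=` O n].
  elim: n => [|n [nPn VnE subVn]]; first by split=> //=; exact: root_sub (nO 0%nat).
  have nP : nbhs 1 (P n.+1) by apply: filterI => //; rewrite VnE; case: (root_spec _ nPn).
  by split=> // g /(root_sub _ nP) [].
exists V; split=> n; have [nPn VnE subVn] := V_spec n => //.
- by rewrite VnE; case: (root_spec _ nPn).
- by rewrite VnE; case: (root_spec _ nPn) => _ [].
- have [nPn1 Vn1E _] := V_spec n.+1; rewrite Vn1E => a b c Va Vb Vc.
  by case: (root_spec _ nPn1) => _ [_ /(_ a b c Va Vb Vc) []].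
Qed.

Lemma dense_translate D B : dense D -> nbhs 1 B -> forall x, exists2 d, D d & B (x^-1 * d).
Proof.
move=> D_dense nB x; have := nbhs_translate x nB; rewrite nbhsE => -[O [O_open Ox] O_sub].
have [d [Od Dd]] := D_dense O (ex_intro _ x Ox) O_open.
by exists d => //; exact: O_sub.
Qed.

Lemma metric_ball_nbhs (d : G -> G -> R) x r :
  is_metric d -> metric_compatible d -> 0 < r ->  nbhs x [set y | d x y < r].
Proof.
move=> [_ [d_eq0 [_ d_tri]]] d_compat r_gt0; apply: open_nbhs_nbhs; split.
  apply/d_compat => y /= xy; exists (r - d x y)%R; split=> [|z yz]; first lra.
  by have := d_tri x y z; lra.
by rewrite /= (proj2 (d_eq0 x x) erefl).
Qed.

Lemma metric_eq_dyadic (d : G -> G -> R) x y :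
  is_metric d -> (forall n, d x y < dyadic n) -> x = y.
Proof.
move=> [d_ge0 [d_eq0 _]] d_small; apply/d_eq0/Rle_antisym/d_ge0.
apply: Rnot_lt_le => d_gt0; have [n lt_n] := dyadic_small d_gt0.
by have := d_small n; lra.
Qed.

Lemma metric_cube_root_sequence (d : G -> G -> R) U :
  is_metric d -> metric_compatible d -> nbhs 1 U ->
  exists V : nat -> set G, [/\ forall n, nbhs 1 (V n),
    forall n g, V n g -> V n g^-1,
    forall n a b c, V n.+1 a -> V n.+1 b -> V n.+1 c -> V n (a * b * c),
    V 0%nat `<=` U & forall x, (forall n, V n x) -> x = 1].
Proof.
move=> d_metric d_compat nU.
have nO n : nbhs 1 (U `&` [set x | d 1 x < dyadic n]).
  by apply: filterI => //; exact: metric_ball_nbhs d_metric d_compat (dyadic_gt0 n).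
have [V [V_nbhs V_inv V_cube V_O]] := cube_root_sequence nO.
exists V; split=> // [x /V_O [] // | x Vx].
by apply/esym/(metric_eq_dyadic d_metric) => n; case: (V_O n x (Vx n)).
Qed.

Lemma separable_cover B : separable G -> nbhs 1 B ->
  exists e : nat -> G, forall x, exists n, B ((e n)^-1 * x).
Proof.
move=> [D [D_count D_dense]] nB.
have [e D_e] := countable_sub_range (1 : G) D_count.
exists e => x; have [_ /D_e [n _ <-]] := dense_translate D_dense (nbhs1_inv nB) x.
by rewrite /= invgM invgK; exists n.
Qed.

Definition norm_dist (L : G -> R) x y := L (x^-1 * y).

Lemma norm_dist_left_invariant L : left_invariant (norm_dist L).
Proof. by move=> g x y; rewrite /norm_dist invgM -mulgA mulKg. Qed.

Section NormDist.
Variable L : G -> R.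
Hypothesis LV : forall x, L x^-1 = L x.
Hypothesis LM : forall x y, L (x * y) <= L x + L y.

Lemma norm_dist_sym x y : norm_dist L x y = norm_dist L y x.
Proof. by rewrite /norm_dist -LV invgM invgK. Qed.

Lemma norm_dist_triangle x y z : norm_dist L x z <= norm_dist L x y + norm_dist L y z.
Proof.
rewrite /norm_dist; have -> : x^-1 * z = x^-1 * y * (y^-1 * z) by rewrite mulgA mulgK.
exact: LM.
Qed.

Lemma norm_dist_metric : (forall x, L x = 0 <-> x = 1) -> is_metric (norm_dist L).
Proof.
move=> L_eq0; have L1 : L 1 = 0 by apply/L_eq0.
split=> [x y | ].
  by have := LM (x^-1 * y) (x^-1 * y)^-1; rewrite mulgV L1 LV /norm_dist; lra.
split=> [x y | ]; last by split; [exact: norm_dist_sym | exact: norm_dist_triangle].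
rewrite /norm_dist L_eq0; split=> [xy1 | ->]; last exact: mulVg.
by rewrite -(mulVKg x y) xy1 mulg1.
Qed.

Lemma norm_dist_continuous : (forall eps, 0 < eps -> nbhs 1 [set x | L x < eps]) ->
  continuous_metric (norm_dist L).
Proof.
move=> L_small [x y] P /= /nbhs_ballP [e e_gt0 e_P].
have half_gt0 : 0 < (e / 2)%R by apply: Rdiv_lt_0_compat; [apply/RltP | lra].
have near_xy : nbhs (x, y) [set p : G * G |
    norm_dist L x p.1 < e / 2 /\ norm_dist L y p.2 < e / 2].
  exists ([set x' | L (x^-1 * x') < e / 2], [set y' | L (y^-1 * y') < e / 2]) => //.
  by split; exact: nbhs_translate (L_small _ half_gt0).
apply: filterS near_xy => -[x' y'] /= [near_x near_y]; apply: e_P.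
rewrite /ball /= -RminusE -RabsE; apply/RltP/Rabs_def1.
- have := norm_dist_triangle x x' y; have := norm_dist_triangle x' y' y.
  rewrite (norm_dist_sym y' y); lra.
- have := norm_dist_triangle x' x y'; have := norm_dist_triangle x y y'.
  rewrite (norm_dist_sym x' x); lra.
Qed.

End NormDist.

Lemma sub_generated A : A `<=` generated A.
Proof. by move=> x Ax H _ /(_ x Ax). Qed.

Lemma generated_subgroup A : is_subgroup (generated A).
Proof.
split=> [H [H1 _] _ // | ]; split=> [x y Ax Ay H H_sub AH | x Ax H H_sub AH].
  by apply: H_sub.2.1; [exact: Ax H H_sub AH | exact: Ay H H_sub AH].
by apply: H_sub.2.2; exact: Ax H H_sub AH.
Qed.

Lemma generated_min A H : is_subgroup H -> A `<=` H -> generated A `<=` H.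
Proof. by move=> H_sub AH x /(_ H H_sub AH). Qed.

Lemma generates_sub A B : generates A -> A `<=` generated B -> generates B.
Proof.
move=> A_gen AB; apply/seteqP; split=> // x _.
have : generated A x by rewrite A_gen.
exact: generated_min (generated_subgroup B) AB x.
Qed.

Lemma subgroup_word_val (H : set G) (W : G -> R -> Prop) K l : is_subgroup H ->
  (forall g w, W g w -> 0 <= w) -> (forall g w, W g w -> w <= K -> H g) ->
  admissible W l -> word_weight l <= K -> H (word_val l).
Proof.
move=> [H1 [HM _]] W_ge0 W_H; elim: l => [|[g w] l IH] /=; first by rewrite word_val_nil.
move=> [Wgw adm_l]; rewrite word_weight_cons word_val_cons /= => w_le.
have := word_weight_ge0 W_ge0 adm_l; have := W_ge0 _ _ Wgw => w_ge0 l_ge0.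
by apply: HM; [apply: W_H Wgw _ | apply: IH adm_l _]; lra.
Qed.

Lemma finite_diameter_dist1 (d : G -> G -> R) A : is_metric d ->
  finite_diameter d A <-> exists M, forall x, A x -> d 1 x <= M.
Proof.
move=> [_ [_ [d_sym d_tri]]]; split=> [[M A_M] | [M A_M]].
  have [[a Aa] | A0] := pselect (A !=set0); last by exists 0 => x Ax; case: A0; exists x.
  by exists (d 1 a + M) => x Ax; have := d_tri 1 a x; have := A_M a x Aa Ax; lra.
exists (M + M) => x y Ax Ay; have := d_tri x 1 y; rewrite (d_sym x 1).
by have := A_M x Ax; have := A_M y Ay; lra.
Qed.

Lemma strongly_bounded_sub A B : A `<=` B -> strongly_bounded B -> strongly_bounded A.
Proof.
move=> AB B_sb d d_metric d_li; have [M B_M] := B_sb d d_metric d_li.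
by exists M => x y /AB Bx /AB By; exact: B_M.
Qed.

Lemma strongly_boundedU_image A (e : nat -> G) N :
  strongly_bounded A -> strongly_bounded (A `|` e @` `I_N).
Proof.
move=> A_sb d d_metric d_li; apply/(finite_diameter_dist1 _ d_metric).
have [M1 A_M1] := (finite_diameter_dist1 _ d_metric).1 (A_sb d d_metric d_li).
have [M2 e_M2] := nat_fun_bounded (fun n => d 1 (e n)) N.
exists (Rmax M1 M2) => x [/A_M1 x_le | [n /e_M2 n_le <-]].
  by have := Rmax_l M1 M2; lra.
by have := Rmax_r M1 M2; lra.
Qed.

End TopologicalGroup.

Section CoarseMetric.
Variables (G : topologicalGroupType) (V : nat -> set G) (e : nat -> G).
Hypothesis V_nbhs : forall n, nbhs 1 (V n).
Hypothesis V_inv : forall n g, V n g -> V n g^-1.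
Hypothesis V_cube : forall n a b c, V n.+1 a -> V n.+1 b -> V n.+1 c -> V n (a * b * c).
Hypothesis V_sep : forall x, (forall n, V n x) -> x = 1.
Hypothesis e_cover : forall x, exists n, V 0 ((e n)^-1 * x).

(* The shift by 2 keeps the letters e_n above weight 1, so that words of weight
   at most 1 consist of letters of the V_n only. *)
Definition coarse_letter (g : G) (w : R) : Prop :=
  (exists2 n, V n g & w = dyadic n) \/ (exists2 n, g = e n \/ g^-1 = e n & w = INR n + 2).

Definition coarse_length : G -> R := word_length coarse_letter.

Let V1 n : V n 1 := nbhs_singleton (V_nbhs n).

Lemma coarse_letter_gt0 g w : coarse_letter g w -> 0 < w.
Proof. by case=> [[n _ ->] | [n _ ->]]; [exact: dyadic_gt0 | have := pos_INR n; lra]. Qed.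

Let coarse_letter_ge0 g w (gw : coarse_letter g w) : 0 <= w :=
  Rlt_le _ _ (coarse_letter_gt0 gw).

Lemma coarse_letter_inv g w : coarse_letter g w -> coarse_letter g^-1 w.
Proof.
case=> [[n Vg ->] | [n g_e ->]]; first by left; exists n => //; exact: V_inv.
by right; exists n; rewrite // invgK; case: g_e; [right | left].
Qed.

Lemma coarse_letter_dyadic g w : coarse_letter g w -> w <= 1%R ->
  exists2 n, V n g & w = dyadic n.
Proof. by case=> // [[n _ ->]]; have := pos_INR n; lra. Qed.

Lemma coarse_words_spans x : words_of coarse_letter x !=set0.
Proof.
have [n Vx] := e_cover x.
exists [:: (e n, INR n + 2); ((e n)^-1 * x, dyadic 0)]; split.
  by split; [right; exists n; [left |] | split; [left; exists 0%nat |]].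
by rewrite word_val_cons /word_val big_seq1 /= mulVKg.
Qed.

Lemma coarse_length_eq0 x : coarse_length x = 0 <-> x = 1.
Proof.
split=> [x0 | ->]; last exact: word_length1 coarse_letter_ge0 coarse_words_spans.
apply: V_sep => k.
have [l [adm_l l_x]] :=
  word_length_approx coarse_letter_ge0 coarse_words_spans x (dyadic_gt0 k).
rewrite -[coarse_length x]/(word_length _ x) in x0; rewrite x0 -l_x => l_lt.
by apply: (kakutani V1 V_cube coarse_letter_gt0 coarse_letter_dyadic adm_l); lra.
Qed.

Lemma coarse_length_small eps : 0 < eps -> nbhs 1 [set x | coarse_length x < eps].
Proof.
move=> eps_gt0; have [n lt_n] := dyadic_small eps_gt0.
apply: filterS (V_nbhs n) => x Vx /=.
have : coarse_letter x (dyadic n) by left; exists n.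
by move=> /(word_length_letter coarse_letter_ge0); rewrite /coarse_length; lra.
Qed.

Lemma coarse_dist_spec : [/\ is_metric (norm_dist coarse_length),
  left_invariant (norm_dist coarse_length) & continuous_metric (norm_dist coarse_length)].
Proof.
have LV := word_lengthV coarse_letter_ge0 coarse_letter_inv coarse_words_spans.
have LM := word_lengthM coarse_letter_ge0 coarse_words_spans.
split; [exact: norm_dist_metric LV LM coarse_length_eq0 | exact: norm_dist_left_invariant |].
exact: norm_dist_continuous LV LM coarse_length_small.
Qed.

Lemma coarse_length_generated N x : coarse_length x < INR N ->
  generated (V 0 `|` e @` `I_N) x.
Proof.
move=> x_lt; have eps_gt0 : 0 < INR N - coarse_length x by lra.
have [l [adm_l <-] l_lt] :=
  word_length_approx coarse_letter_ge0 coarse_words_spans x eps_gt0.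
apply: (subgroup_word_val (K := INR N) (generated_subgroup _) coarse_letter_ge0 _ adm_l);
  last by rewrite /coarse_length in l_lt; lra.
move=> g w [[n Vg ->] _ | [n g_e ->] w_le].
  by apply: sub_generated; left; exact: (V_mono V1 V_cube (leq0n n) Vg).
have n_lt : (n < N)%nat by apply/ltP/INR_lt; lra.
case: g_e => [-> | g_e]; first by apply: sub_generated; right; exists n.
rewrite -(invgK g) g_e; apply: (generated_subgroup _).2.2.
by apply: sub_generated; right; exists n.
Qed.

End CoarseMetric.

Theorem corollary2p13 (G : topologicalGroupType) :
  polish G -> locally_strongly_bounded G -> CB_generated G -> SB_generated G.
Proof.
move=> [G_sep [d0 [d0_metric [d0_compat _]]]] [U [U_open [U1 U_sb]]] [A [A_cb A_gen]].
have [V [V_nbhs V_inv V_cube V0_U V_sep]] :=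
  metric_cube_root_sequence d0_metric d0_compat (open_nbhs_nbhs (conj U_open U1)).
have [e e_cover] := separable_cover G_sep (V_nbhs 0%nat).
have [rho_metric rho_li rho_cont] := coarse_dist_spec V_nbhs V_inv V_cube V_sep e_cover.
have [M A_M] := (finite_diameter_dist1 A rho_metric).1 (A_cb _ rho_metric rho_li rho_cont).
have [N M_lt] := INR_unbounded M.
exists (V 0%nat `|` e @` `I_N); split.
  exact/strongly_boundedU_image/(strongly_bounded_sub V0_U).
apply: (generates_sub A_gen) => a /A_M; rewrite /norm_dist invg1 mul1g => a_le.
by apply: (coarse_length_generated V_nbhs V_cube e_cover); lra.
Qed.
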